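(* For every predictor $p$, the original Hibbard intelligence of $p$ equals the maximum integer $m>0$ such that $p$ learns every evader $e\in E^H_m$; it equals $0$ if there is no such $m$, and $\infty$ if $p$ learns every $e\in E^H_m$ for every $m>0$.
   Context: Let $B=\{0,1\}$ and let $B^*$ be the set of all finite binary sequences, including the empty sequence $\langle\rangle$. A predictor is a Turing machine $p$ which on every input $(x_1,\ldots,x_n)\in B^*$ halts with an output $p(x_1,\ldots,x_n)\in B$. An evader is a Turing machine $e$ which on every input $(y_1,\ldots,y_n)\in B^*$ halts with an output $e(y_1,\ldots,y_n)\in B$. The result of $p$ playing against $e$ is the infinite sequence $(x_1,y_1,x_2,y_2,\ldots)$ defined by $x_1=e(\langle\rangle)$, $y_1=p(\langle\rangle)$, and for all $n\geq 1$, $x_{n+1}=e(y_1,\ldots,y_n)$ and $y_{n+1}=p(x_1,\ldots,x_n)$. We say $p$ learns $e$ if there is $N\in\mathbb N$ such that $x_n=y_n$ for all $n>N$. For an evader $e$ and $n\in\mathbb N$, $t_e(n)$ is the maximum, over all $b\in B^n$, of the number of steps $e$ takes to run on input $b$. For $f,g:\mathbb N\to\mathbb N$, write $f\succ g$ if there is $n_0\in\mathbb N$ with $f(n)>g(n)$ for all $n>n_0$. For $f:\mathbb N\to\mathbb N$, $E_f$ is the set of all evaders $e$ with $f\succ t_e$. Let $g_1,g_2,\ldots$ be Liu's (1960) effective enumeration of the primitive recursive functions $\mathbb N\to\mathbb N$, and for $m>0$ define $f_m(k)=\max_{0<i\leq m}\max_{j\leq k}g_i(j)$. The original Hibbard intelligence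 of a predictor $p$ is the maximum $m>0$ such that $p$ learns every $e\in E_{f_m}$; it is $0$ if there is no such $m$, and $\infty$ if $p$ learns every $e\in E_{f_m}$ for every $m>0$. For $f:\mathbb N\to\mathbb N$, $H(f)=\min\{m>0: f_m\succ f\}$ if such $m$ exists and $H(f)=\infty$ otherwise. For $m\in\mathbb N$, $E^H_m$ is the set of all evaders $e$ with $H(t_e)\leq m$. *)

From mathcomp Require Import all_boot.
Set Implicit Arguments. Unset Strict Implicit. Unset Printing Implicit Defensive.

Inductive sym := Blank | S0 | S1.
Inductive move := MoveL | MoveR.

Definition sym_eqb (a b : sym) : bool :=
  match a, b with
  | Blank, Blank | S0, S0 | S1, S1 => true
  | _, _ => false
  end.

Record TM := mkTM { table : seq (nat * sym * (nat * sym * move)) }.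

Fixpoint lookup (t : seq (nat * sym * (nat * sym * move))) (q : nat) (a : sym)
  : option (nat * sym * move) :=
  match t with
  | [::] => None
  | (q', a', r) :: t' => if (q' == q) && sym_eqb a' a then Some r else lookup t' q a
  end.

Record config := mkConfig { cstate : nat; cleft : seq sym; chead : sym; cright : seq sym }.

Definition halted (M : TM) (c : config) : bool :=
  if lookup (table M) (cstate c) (chead c) is Some _ then false else true.

Definition step (M : TM) (c : config) : config :=
  match lookup (table M) (cstate c) (chead c) with
  | None => c
  | Some (q, b, MoveL) =>
      match cleft c with
      | [::] => mkConfig q [::] Blank (b :: cright c)
      | l :: ls => mkConfig q ls l (b :: cright c)
      end
  | Some (q, b, MoveR) =>
      match cright c with
      | [::] => mkConfig q (b :: cleft c) Blank [::]
      | r :: rs => mkConfig q (b :: cleft c) r rs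
      end
  end.

Definition run (M : TM) (n : nat) (c : config) : config := iter n (step M) c.

Definition sym_of_bool (b : bool) : sym := if b then S1 else S0.

Definition init (w : seq bool) : config :=
  match map sym_of_bool w with
  | [::] => mkConfig 0 [::] Blank [::]
  | a :: s => mkConfig 0 [::] a s
  end.

(* A Turing machine that halts on every input in B^*: both predictors  *)
(* and evaders are such machines.                                     *)
Record machine := Machine {
  mtm :> TM;
  mhalts : forall w : seq bool, exists n, halted mtm (run mtm n (init w)) }.

Definition steps (M : machine) (w : seq bool) : nat := ex_minn (mhalts M w).

Definition output (M : machine) (w : seq bool) : bool :=
  sym_eqb (chead (run M (steps M w) (init w))) S1.

(* hist n = ((x_1..x_n), (y_1..y_n)).                                  *)
Fixpoint hist (p e : machine) (n : nat) : seq bool * seq bool :=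
  match n with
  | 0 => ([::], [::])
  | n'.+1 => let h := hist p e n' in
             (rcons h.1 (output e h.2), rcons h.2 (output p h.1))
  end.

(* x_{n+1} = e(y_1..y_n), y_{n+1} = p(x_1..x_n) *)
Definition xs (p e : machine) (n : nat) : bool := output e (hist p e n).2.
Definition ys (p e : machine) (n : nat) : bool := output p (hist p e n).1.

(* p learns e: exists N, for all n > N, x_n = y_n (1-indexed);         *)
(* with 0-indexed xs/ys this reads: for all n >= N, xs n = ys n.        *)
Definition learns (p e : machine) : Prop :=
  exists N, forall n, N <= n -> xs p e n = ys p e n.

Definition time (e : machine) (n : nat) : nat :=
  \max_(b : n.-tuple bool) steps e b.

Definition dom (f g : nat -> nat) : Prop :=
  exists n0, forall n, n0 < n -> g n < f n.

Definition E_ (f : nat -> nat) (e : machine) : Prop := dom f (time e).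

(* f_m(k) = max_{0<i<=m} max_{j<=k} g_i(j), for an enumeration g_1,g_2,... *)
Definition fm (g : nat -> nat -> nat) (m k : nat) : nat :=
  \max_(1 <= i < m.+1) \max_(0 <= j < k.+1) g i j.

Inductive inat := Fin of nat | Inf.

Definition max_value (P : nat -> Prop) (v : inat) : Prop :=
  match v with
  | Inf => forall m, 0 < m -> P m
  | Fin 0 => forall m, 0 < m -> ~ P m
  | Fin m => P m /\ forall m', m < m' -> ~ P m'
  end.

Definition hibbard_intelligence (g : nat -> nat -> nat) (p : machine) (v : inat) : Prop :=
  max_value (fun m => forall e : machine, E_ (fm g m) e -> learns p e) v.

Definition H_value (g : nat -> nat -> nat) (f : nat -> nat) (v : inat) : Prop :=
  match v with
  | Inf => forall m, 0 < m -> ~ dom (fm g m) f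
  | Fin m => 0 < m /\ dom (fm g m) f /\ forall m', 0 < m' -> m' < m -> ~ dom (fm g m') f
  end.

Definition EH (g : nat -> nat -> nat) (m : nat) (e : machine) : Prop :=
  exists k, H_value g (time e) (Fin k) /\ k <= m.

From Stdlib Require Import Classical.
From mathcomp Require Import all_boot.

(* The point is that, for every m > 0, the two classes coincide:
   - the bounds f_m grow pointwise with m, so f_k >- t_e implies
     f_m >- t_e for k <= m; hence H(t_e) <= m puts e in E_{f_m};
   - conversely, if f_m >- t_e then the set of positive k with f_k >- t_e
     is nonempty, so it has a least element H(t_e), which is at most m.
   Since max_value only inspects its predicate at positive arguments, two
   predicates agreeing on every m > 0 have the same maximum value, and the
   theorem follows by applying this to "p learns every evader of the
   class" for the two families of classes. *)

Set Implicit Arguments.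
Unset Strict Implicit.
Unset Printing Implicit Defensive.

Section Bounds.
Variable g : nat -> nat -> nat.

(* f_m(n) is nondecreasing in m: f_{m+1} maximises over one more g_i. *)
Lemma fm_monotone k m n : k <= m -> fm g k n <= fm g m n.
Proof.
elim: m => [|m IHm]; first by rewrite leqn0 => /eqP->.
rewrite leq_eqVlt ltnS => /orP[/eqP-> // | /IHm le_km].
apply: leq_trans le_km _.
by rewrite /fm [in X in _ <= X]big_nat_recr //= leq_maxl.
Qed.

Lemma dom_fm_monotone k m f : k <= m -> dom (fm g k) f -> dom (fm g m) f.
Proof.
move=> le_km [n0 dom_k]; exists n0 => n /dom_k lt_fn.
exact: leq_trans lt_fn (fm_monotone n le_km).
Qed.

End Bounds.

Lemma least_positive_witness (P : nat -> Prop) k : 0 < k -> P k ->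
  exists2 k', k' <= k &
    [/\ 0 < k', P k' & forall m, 0 < m -> m < k' -> ~ P m].
Proof.
elim/ltn_ind: k => k IHk k_gt0 Pk.
have [[m [m_gt0 lt_mk Pm]] | no_smaller] :=
  classic (exists m, [/\ 0 < m, m < k & P m]).
- have [k' le_k'm least] := IHk m lt_mk m_gt0 Pm.
  by exists k' => //; apply: leq_trans le_k'm (ltnW lt_mk).
- exists k => //; split=> // m m_gt0 lt_mk Pm.
  by apply: no_smaller; exists m.
Qed.

Lemma E_fm_iff_EH g m e : 0 < m -> E_ (fm g m) e <-> EH g m e.
Proof.
move=> m_gt0; split.
- move=> dom_m.
  have [k le_km [k_gt0 dom_k least]] :=
    least_positive_witness (P := fun k => dom (fm g k) (time e)) m_gt0 dom_m.
  by exists k.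
- by move=> [k [[_ [dom_k _]] le_km]]; apply: dom_fm_monotone le_km dom_k.
Qed.

Lemma max_value_iff (P Q : nat -> Prop) v :
  (forall m, 0 < m -> P m <-> Q m) -> max_value P v <-> max_value Q v.
Proof.
move=> PQ; case: v => [[|m]|] /=.
- by split=> notP m m_gt0 /(PQ m m_gt0); apply: notP.
- have lt_gt0 m' : m.+1 < m' -> 0 < m' by move/(leq_trans _); apply.
  split=> -[Pm maxm]; split; try by apply/PQ.
  + by move=> m' lt_m' /(PQ m' (lt_gt0 m' lt_m')); apply: maxm.
  + by move=> m' lt_m' /(PQ m' (lt_gt0 m' lt_m')); apply: maxm.
- by split=> allP m m_gt0; apply/(PQ m m_gt0)/allP.
Qed.

Theorem mainTheorem6 (g : nat -> nat -> nat) (p : machine) (v : inat) :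
  hibbard_intelligence g p v <->
  max_value (fun m => forall e : machine, EH g m e -> learns p e) v.
Proof.
apply: max_value_iff => m m_gt0.
by split=> learns_all e /(@E_fm_iff_EH g m e m_gt0) e_in; apply: learns_all.
Qed.
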